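(* Let $\mathcal X=\{x_{n,k}\}$ be a Marcinkiewicz–Zygmund family on $\mathbb T$ with weights $\tau_{n,k}$ and constants $A,B>0$, and let $w_{n,k}$ and $I_n$ be the associated quadrature weights and quadrature rules (as defined in the context). Then: (i) $I_n$ is exact on $\mathcal T_n$, i.e. $I_n(p)=\int_{-1/2}^{1/2}p(x)\,dx$ for all $p\in\mathcal T_n$. (ii) For $f\in H^\sigma(\mathbb T)$, $\sigma>1/2$, $$|I_n(f)|^2\le A^{-1}\sum_{k=1}^{L_n}|f(x_{n,k})|^2\tau_{n,k}\le \frac BA\|f\|_\infty^2.$$
   Context: $\mathbb T=\mathbb R/\mathbb Z\cong(-1/2,1/2]$ with Lebesgue measure; $\langle f,g\rangle=\int_{-1/2}^{1/2}f\bar g\,dx$. $\mathcal T_n$ = trigonometric polynomials $\sum_{|k|\le n}c_ke^{2\pi ikx}$. $H^\sigma(\mathbb T)$ = functions with $\sum_{k\in\mathbb Z}|\hat f(k)|^2(1+k^2)^\sigma<\infty$, $\hat f(k)=\int_0^1f(x)e^{-2\pi ikx}dx$ (for $\sigma>1/2$ these are continuous). A Marcinkiewicz–Zygmund family is a set $\{x_{n,k}: n\in\mathbb N,k=1,\dots,L_n\}\subseteq\mathbb T$ with weights $\tau_{n,k}>0$ and constants $A,B>0$ independent of $n$ such that $A\|p\|_2^2\le\sum_{k=1}^{L_n}|p(x_{n,k})|^2\tau_{n,k}\le B\|p\|_2^2$ for all $p\in\mathcal T_n$. Let $k^{(n)}_x\in\mathcal T_n$ be the reproducing kernel of $\mathcal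 T_n$, $p(x)=\langle p,k^{(n)}_x\rangle$ for $p\in\mathcal T_n$ (the Dirichlet kernel $k^{(n)}_x(y)=\sin((2n+1)\pi(y-x))/\sin(\pi(y-x))$). Let $S_np=\sum_{k=1}^{L_n}\tau_{n,k}\langle p,k^{(n)}_{x_{n,k}}\rangle k^{(n)}_{x_{n,k}}$ (the frame operator, invertible on $\mathcal T_n$), $e_{n,k}=S_n^{-1}(\tau_{n,k}^{1/2}k^{(n)}_{x_{n,k}})$, $w_{n,k}=\tau_{n,k}^{1/2}\int_{-1/2}^{1/2}e_{n,k}(x)\,dx$, and $I_n(f)=\sum_{k=1}^{L_n}f(x_{n,k})w_{n,k}$. *)

From HB Require Import structures.
From mathcomp Require Import all_boot all_order all_algebra.
From mathcomp Require Import all_classical all_reals all_analysis.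
From mathcomp Require Import complex.
Set Implicit Arguments. Unset Strict Implicit. Unset Printing Implicit Defensive.
Import Order.TTheory GRing.Theory Num.Theory numFieldNormedType.Exports.
Local Open Scope classical_set_scope.
Local Open Scope ring_scope.
Local Open Scope complex_scope.

Definition cexp2pi (R : realType) (t : R) : R[i] :=
  (cos (2 * pi * t)) +i* (sin (2 * pi * t)).

Definition cint (R : realType) (a b : R) (g : R -> R[i]) : R[i] :=
  (Rintegral (@lebesgue_measure R) `[a, b] (fun x => complex.Re (g x))) +i*
  (Rintegral (@lebesgue_measure R) `[a, b] (fun x => complex.Im (g x))).

Definition freq (n : nat) (j : 'I_(n.*2.+1)) : int := (j%:Z - n%:Z)%R.

(* T_n : trigonometric polynomials of degree <= n, as 1-periodic functions on R *)
Definition trig_poly (R : realType) (n : nat) (p : R -> R[i]) : Prop :=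
  exists c : 'I_(n.*2.+1) -> R[i],
    forall x : R, p x = \sum_(j < n.*2.+1) c j * cexp2pi ((freq j)%:~R * x).

Definition ip (R : realType) (f g : R -> R[i]) : R[i] :=
  cint (- (1/2)) (1/2) (fun y => f y * (g y)^*).

Definition norm2sq (R : realType) (f : R -> R[i]) : R :=
  Rintegral (@lebesgue_measure R) `[- (1/2), 1/2] (fun y => Normc.normc (f y) ^+ 2).

Definition supnorm (R : realType) (f : R -> R[i]) : R :=
  sup (range (fun x => Normc.normc (f x))).

(* reproducing kernel of T_n (Dirichlet kernel): k_x(y) = sum_{|j|<=n} e(j(y-x)) *)
Definition kern (R : realType) (n : nat) (x : R) : R -> R[i] :=
  fun y => \sum_(j < n.*2.+1) cexp2pi ((freq j)%:~R * (y - x)).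

Definition MZ_family (R : realType) (L : nat -> nat)
    (X : forall n, 'I_(L n) -> R) (tau : forall n, 'I_(L n) -> R) (A B : R) : Prop :=
  [/\ 0 < A, 0 < B, (forall n k, 0 < tau n k) &
      forall n p, trig_poly n p ->
        A * norm2sq p <= \sum_(k < L n) Normc.normc (p (X n k)) ^+ 2 * tau n k
        /\ \sum_(k < L n) Normc.normc (p (X n k)) ^+ 2 * tau n k <= B * norm2sq p].

Definition frameS (R : realType) (L : nat -> nat)
    (X : forall n, 'I_(L n) -> R) (tau : forall n, 'I_(L n) -> R) (n : nat)
    (p : R -> R[i]) : R -> R[i] :=
  fun y => \sum_(k < L n)
     (tau n k)%:C * ip p (kern n (X n k)) * kern n (X n k) y.

(* S_n^{-1} on T_n: the element p of T_n with S_n p = g (unique when S_n is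
   invertible on T_n, which holds for MZ families); 0 if there is none. *)
Definition frameSinv (R : realType) (L : nat -> nat)
    (X : forall n, 'I_(L n) -> R) (tau : forall n, 'I_(L n) -> R) (n : nat)
    (g : R -> R[i]) : R -> R[i] :=
  match pselect (exists p, trig_poly n p /\ frameS X tau n p = g) with
  | left h => proj1_sig (cid h)
  | right _ => fun _ => 0
  end.

Definition dualframe (R : realType) (L : nat -> nat)
    (X : forall n, 'I_(L n) -> R) (tau : forall n, 'I_(L n) -> R) (n : nat)
    (k : 'I_(L n)) : R -> R[i] :=
  frameSinv X tau n (fun y => (Num.sqrt (tau n k))%:C * kern n (X n k) y).

Definition qweight (R : realType) (L : nat -> nat)
    (X : forall n, 'I_(L n) -> R) (tau : forall n, 'I_(L n) -> R) (n : nat)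
    (k : 'I_(L n)) : R[i] :=
  (Num.sqrt (tau n k))%:C * cint (- (1/2)) (1/2) (dualframe X tau k).

Definition quad (R : realType) (L : nat -> nat)
    (X : forall n, 'I_(L n) -> R) (tau : forall n, 'I_(L n) -> R) (n : nat)
    (f : R -> R[i]) : R[i] :=
  \sum_(k < L n) f (X n k) * qweight X tau k.

Definition fourier_coef (R : realType) (f : R -> R[i]) (k : int) : R[i] :=
  cint 0 1 (fun x => f x * cexp2pi (- (k%:~R) * x)).

(* H^sigma(T), sigma > 1/2: (continuous representatives of) 1-periodic functions
   with sum_k |hat f(k)|^2 (1+k^2)^sigma < oo *)
Definition sobolev (R : realType) (s : R) (f : R -> R[i]) : Prop :=
  [/\ (forall x, f (x + 1) = f x),
      continuous (fun x : R => complex.Re (f x)),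
      continuous (fun x : R => complex.Im (f x)) &
      (\esum_(k in [set: int])
         ((Normc.normc (fourier_coef f k) ^+ 2 * (1 + (k%:~R : R) ^+ 2) `^ s)%:E)
        < +oo)%E].

From HB Require Import structures.
From mathcomp Require Import all_boot all_order all_algebra.
From mathcomp Require Import all_classical all_reals all_analysis.
From mathcomp Require Import complex.
From mathcomp Require Import ring.
Import Order.TTheory GRing.Theory Num.Theory numFieldNormedType.Exports.
Local Open Scope classical_set_scope.
Local Open Scope complex_scope.
Local Open Scope ring_scope.
Set Implicit Arguments. Unset Strict Implicit. Unset Printing Implicit Defensive.

(* With u := S_n^{-1} 1, self-adjointness of S_n gives
   int e_{n,k} = <S_n^{-1}(tau^{1/2} k_{x_{n,k}}), S_n u> = tau^{1/2} conj (u x_{n,k}),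
   so w_{n,k} = tau_{n,k} conj (u x_{n,k}).  Hence for p in T_n,
   I_n p = sum_k tau_{n,k} p(x_{n,k}) conj (u x_{n,k}) = <S_n p, u> = <p, S_n u> = int p.
   By Cauchy-Schwarz |I_n f|^2 <= (sum_k |f x_{n,k}|^2 tau_{n,k}) Q with
   Q := sum_k |u x_{n,k}|^2 tau_{n,k} = <S_n u, u> = conj (u^(0)); the lower MZ bound gives
   A Q^2 = A |u^(0)|^2 <= A ||u||^2 <= Q, i.e. Q <= 1/A.  The upper MZ bound for p = 1 gives
   sum_k tau_{n,k} <= B, and an H^sigma function is continuous and periodic, hence bounded.
   All of this is computed on coefficient vectors in C^{2n+1}, where S_n is a matrix that the
   lower MZ bound makes injective, hence invertible. *)

Local Notation Re := complex.Re.
Local Notation Im := complex.Im.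

Lemma continuous_sum {K : numFieldType} {V : normedModType K} {T : topologicalType}
    (I : Type) (r : seq I) (g : I -> T -> V) :
  (forall i, continuous (g i)) -> continuous (fun x => \sum_(i <- r) g i x).
Proof.
move=> cg; elim: r => [|i r IH] x.
  by under [fun _ => _]funext do rewrite big_nil; exact: cst_continuous.
by under [fun _ => _]funext do rewrite big_cons; apply: continuousD; [exact: cg|exact: IH].
Qed.

Section RealIntegral.
Variable R : realType.
Local Notation mu := (@lebesgue_measure R).
Implicit Types (a b c : R) (g : R -> R).

Lemma continuous_integrable_itv a b g :
  continuous g -> mu.-integrable `[a, b] (EFin \o g).
Proof.
move=> cg; apply: continuous_compact_integrable; first exact: segment_compact.
exact: continuous_subspaceT.
Qed.

Lemma Rintegral_itv_sum a b (I : Type) (r : seq I) (g : I -> R -> R) :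
  (forall i, continuous (g i)) ->
  Rintegral mu `[a, b] (fun x => \sum_(i <- r) g i x) =
  \sum_(i <- r) Rintegral mu `[a, b] (g i).
Proof.
move=> cg; elim: r => [|i r IH].
  rewrite big_nil -[RHS](mul0r (fine (mu `[a, b]))) -Rintegral_cst //.
  by congr Rintegral; apply: funext => x; rewrite big_nil.
have -> : (fun x => \sum_(j <- i :: r) g j x) = g i \+ (fun x => \sum_(j <- r) g j x).
  by apply: funext => x; rewrite big_cons.
rewrite big_cons -IH RintegralD //; apply: continuous_integrable_itv => //.
exact: continuous_sum.
Qed.

Lemma Rintegral_itv_derive a b g (G : R -> R) : a < b -> continuous g ->
  (forall x : R, is_derive x (1 : R) G (g x)) -> Rintegral mu `[a, b] g = G b - G a.
Proof.
move=> ab cg dG.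
have cG : continuous G.
  by move=> x; apply/differentiable_continuous/derivable1_diffP; exact: ex_derive.
rewrite /Rintegral (@continuous_FTC2 _ g G _ _ ab (continuous_subspaceT cg)) ?EFinB //.
- split; first by move=> x _; exact: ex_derive.
  + exact/cvg_at_right_filter/cG.
  + exact/cvg_at_left_filter/cG.
- by move=> x _; rewrite derive1E derive_val.
Qed.

Lemma is_derive_mulr c x : is_derive x (1 : R) ( *%R c) c.
Proof.
by have := is_deriveZ c (is_derive_id x (1 : R)); rewrite /GRing.scale /= mulr1.
Qed.

Lemma continuous_cosM c : continuous (fun y => cos (c * y)).
Proof. by move=> x; apply: continuous_comp; [exact: mulrl_continuous|exact: continuous_cos]. Qed.

Lemma continuous_sinM c : continuous (fun y => sin (c * y)).
Proof. by move=> x; apply: continuous_comp; [exact: mulrl_continuous|exact: continuous_sin]. Qed.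

Lemma Rintegral_cosM a b c : a < b -> c != 0 ->
  Rintegral mu `[a, b] (fun y => cos (c * y)) = (sin (c * b) - sin (c * a)) / c.
Proof.
move=> ab c0.
have dG x : is_derive x (1 : R) (fun y => c^-1 * sin (c * y)) (cos (c * x)).
  have := is_deriveZ c^-1 (is_derive1_comp (is_derive_sin _) (is_derive_mulr c x)).
  by move/is_derive_eq; apply; rewrite /GRing.scale /=; field.
by rewrite (Rintegral_itv_derive ab (@continuous_cosM c) dG); field.
Qed.

Lemma Rintegral_sinM a b c : a < b -> c != 0 ->
  Rintegral mu `[a, b] (fun y => sin (c * y)) = (cos (c * a) - cos (c * b)) / c.
Proof.
move=> ab c0.
have dG x : is_derive x (1 : R) (fun y => - c^-1 * cos (c * y)) (sin (c * x)).
  have := is_deriveZ (- c^-1) (is_derive1_comp (is_derive_cos _) (is_derive_mulr c x)).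
  by move/is_derive_eq; apply; rewrite /GRing.scale /=; field.
by rewrite (Rintegral_itv_derive ab (@continuous_sinM c) dG); field.
Qed.

End RealIntegral.

Section ComplexFacts.
Variable R : rcfType.
Implicit Types (x y z : R[i]).

Lemma ReM x y : Re (x * y) = Re x * Re y - Im x * Im y.
Proof. by case: x => a b; case: y => c d. Qed.

Lemma ImM x y : Im (x * y) = Re x * Im y + Im x * Re y.
Proof. by case: x => a b; case: y => c d. Qed.

Lemma Re_sum (I : Type) (r : seq I) (F : I -> R[i]) :
  Re (\sum_(i <- r) F i) = \sum_(i <- r) Re (F i).
Proof. exact: raddf_sum. Qed.

Lemma Im_sum (I : Type) (r : seq I) (F : I -> R[i]) :
  Im (\sum_(i <- r) F i) = \sum_(i <- r) Im (F i).
Proof. exact: raddf_sum. Qed.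

Lemma normc_ge0 z : 0 <= Normc.normc z.
Proof. by case: z => a b; exact: sqrtr_ge0. Qed.

Lemma normc_conj z : Normc.normc z^* = Normc.normc z.
Proof. by case: z => a b /=; rewrite sqrrN. Qed.

Lemma normc_real (a : R) : Normc.normc a%:C = `|a|.
Proof. by rewrite /= expr0n /= addr0 sqrtr_sqr. Qed.

Lemma normc_sum (I : Type) (r : seq I) (F : I -> R[i]) :
  Normc.normc (\sum_(i <- r) F i) <= \sum_(i <- r) Normc.normc (F i).
Proof.
elim: r => [|i r IH]; first by rewrite !big_nil Normc.normc0.
by rewrite !big_cons; apply: le_trans (le_normcD _ _) _; exact: lerD.
Qed.

Lemma sqr_normcE z : (Normc.normc z ^+ 2)%:C = z * z^*.
Proof.
case: z => a b; rewrite /= sqr_sqrtr ?addr_ge0 ?sqr_ge0 //.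
by apply/eqP; rewrite eq_complex /=; apply/andP; split; apply/eqP; ring.
Qed.

Lemma conj_realC (a : R) : (a%:C)^* = a%:C :> R[i].
Proof. exact: conjc_real. Qed.

Lemma normc_sqrE z : Normc.normc z ^+ 2 = Re (z * z^*).
Proof. by rewrite -sqr_normcE. Qed.

End ComplexFacts.

Lemma sqr_sum_mul_le (R : realDomainType) (I : finType) (a b : I -> R) :
  (\sum_i a i * b i) ^+ 2 <= (\sum_i a i ^+ 2) * (\sum_i b i ^+ 2).
Proof.
set Sa := \sum_i a i ^+ 2; set Sb := \sum_i b i ^+ 2; set Sab := \sum_i a i * b i.
have Sb0 : 0 <= Sb by apply: sumr_ge0 => i _; exact: sqr_ge0.
have [Sb_eq0|Sb_neq0] := eqVneq Sb 0.
  have b0 i : b i = 0.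
    apply/eqP; rewrite -sqrf_eq0; apply/eqP.
    exact: (psumr_eq0P (fun i _ => sqr_ge0 (b i)) Sb_eq0).
  by rewrite /Sab big1 => [|i _]; rewrite ?b0 ?mulr0 // Sb_eq0 expr0n mulr0.
have Sb_gt0 : 0 < Sb by rewrite lt0r Sb_neq0.
have : 0 <= Sb * (Sa * Sb - Sab ^+ 2).
  have -> : Sb * (Sa * Sb - Sab ^+ 2) = \sum_i (a i * Sb - b i * Sab) ^+ 2.
    transitivity (\sum_i (a i ^+ 2 * Sb ^+ 2 - a i * b i * (2 * Sb * Sab) + b i ^+ 2 * Sab ^+ 2)).
      by rewrite big_split sumrB /= -!mulr_suml -/Sa -/Sb -/Sab; ring.
    by apply: eq_bigr => i _; ring.
  by apply: sumr_ge0 => i _; exact: sqr_ge0.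
by rewrite pmulr_rge0 // subr_ge0 mulrC.
Qed.

Lemma sin_mulr_pi_int (R : realType) (m : int) : sin (pi * m%:~R) = 0 :> R.
Proof.
have sin_pi_nat (k : nat) : sin (pi * k%:R) = 0 :> R.
  by rewrite mulr_natr -[_ *+ _]add0r (alternatingn (@sinDpi R)) sin0 mulr0.
by case: m => k; rewrite ?NegzE ?rmorphN /= ?mulrN ?sinN sin_pi_nat ?oppr0.
Qed.

Section ComplexIntegral.
Variable R : realType.
Local Notation mu := (@lebesgue_measure R).

Lemma cint_sumM (a b : R) (I : Type) (r : seq I) (c : I -> R[i]) (g : I -> R -> R[i]) :
  (forall i, continuous (fun y => Re (g i y))) ->
  (forall i, continuous (fun y => Im (g i y))) ->
  cint a b (fun y => \sum_(i <- r) c i * g i y) = \sum_(i <- r) c i * cint a b (g i).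
Proof.
move=> cRe cIm.
have contZ (p : R) (f : R -> R) : continuous f -> continuous (fun y => p * f y).
  by move=> cf y; apply: continuousM; [exact: cst_continuous|exact: cf].
have int_lin (p q : R) (f h : R -> R) : continuous f -> continuous h ->
    Rintegral mu `[a, b] (fun y => p * f y + q * h y) =
    p * Rintegral mu `[a, b] f + q * Rintegral mu `[a, b] h.
  move=> cf ch; rewrite RintegralD ?RintegralZl //;
    by apply: continuous_integrable_itv => //; apply: contZ.
have contD (f h : R -> R) : continuous f -> continuous h -> continuous (f \+ h).
  by move=> cf ch y; apply: continuousD; [exact: cf|exact: ch].
apply/eqP; rewrite eq_complex Re_sum Im_sum /=; apply/andP; split; apply/eqP.
- transitivity (Rintegral mu `[a, b] (fun y =>
      \sum_(i <- r) (Re (c i) * Re (g i y) + (- Im (c i)) * Im (g i y)))).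
    congr Rintegral; apply: funext => y; rewrite Re_sum.
    by apply: eq_bigr => i _; rewrite ReM mulNr.
  rewrite Rintegral_itv_sum => [|i]; last by apply: contD; apply: contZ.
  by apply: eq_bigr => i _; rewrite int_lin // ReM mulNr.
- transitivity (Rintegral mu `[a, b] (fun y =>
      \sum_(i <- r) (Re (c i) * Im (g i y) + Im (c i) * Re (g i y)))).
    congr Rintegral; apply: funext => y; rewrite Im_sum.
    by apply: eq_bigr => i _; rewrite ImM.
  rewrite Rintegral_itv_sum => [|i]; last by apply: contD; apply: contZ.
  by apply: eq_bigr => i _; rewrite int_lin // ImM.
Qed.

Lemma norm2sq_ip (f : R -> R[i]) : norm2sq f = Re (ip f f).
Proof.
by rewrite /norm2sq /ip /cint /=; congr Rintegral; apply: funext => y; rewrite normc_sqrE.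
Qed.

End ComplexIntegral.

Section Exponential.
Variable R : realType.
Local Notation mu := (@lebesgue_measure R).
Implicit Types (s t c y : R).

Lemma cexp2pi0 : cexp2pi 0 = 1 :> R[i].
Proof. by rewrite /cexp2pi mulr0 cos0 sin0. Qed.

Lemma cexp2piD s t : cexp2pi (s + t) = cexp2pi s * cexp2pi t.
Proof.
by apply/eqP; rewrite eq_complex /= mulrDr cosD sinD; apply/andP; split; apply/eqP; ring.
Qed.

Lemma conj_cexp2pi t : (cexp2pi t)^* = cexp2pi (- t).
Proof. by rewrite /cexp2pi mulrN cosN sinN. Qed.

Lemma cexp2piM c y : cexp2pi (c * y) = cos (2 * pi * c * y) +i* sin (2 * pi * c * y).
Proof. by rewrite /cexp2pi !mulrA. Qed.

Lemma continuous_Re_cexp2piM c : continuous (fun y => Re (cexp2pi (c * y))).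
Proof. by under [fun _ => _]funext do rewrite cexp2piM; exact: continuous_cosM. Qed.

Lemma continuous_Im_cexp2piM c : continuous (fun y => Im (cexp2pi (c * y))).
Proof. by under [fun _ => _]funext do rewrite cexp2piM; exact: continuous_sinM. Qed.

Lemma cint_cexp2pi_int (m : int) :
  cint (- (1/2)) (1/2) (fun y => cexp2pi (m%:~R * y)) = (m == 0)%:R.
Proof.
have ab : - (1/2) < 1/2 :> R by rewrite gtrN // divr_gt0.
have [-> | m0] := eqVneq m 0.
  under [fun _ => _]funext do rewrite mulr0z mul0r cexp2pi0.
  rewrite /cint /= !Rintegral_cst //= lebesgue_measure_itv /= lte_fin ab /=.
  by rewrite opprK -splitr mul1r mul0r.
set c : R := 2 * pi * m%:~R.
have c0 : c != 0 by rewrite !mulf_neq0 ?intr_eq0 ?pnatr_eq0 ?(gt_eqF (@pi_gt0 R)).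
have cpi : c * (1/2) = pi * m%:~R by rewrite /c; field.
rewrite /cint /=; under [fun x => cos _]funext do rewrite mulrA -/c.
under [fun x => sin _]funext do rewrite mulrA -/c.
rewrite Rintegral_cosM // Rintegral_sinM // mulrN cpi sinN cosN sin_mulr_pi_int.
by rewrite subrr oppr0 subrr !mul0r.
Qed.

End Exponential.

Section TrigPoly.
Variables (R : realType) (n : nat).
Local Notation N := n.*2.+1.
Implicit Types (c d : 'I_N -> R[i]) (j l : 'I_N) (x y : R).

Definition emode j y : R[i] := cexp2pi ((freq j)%:~R * y).

Definition tpoly c y : R[i] := \sum_j c j * emode j y.

Lemma freq_inj : injective (@freq n).
Proof.
move=> j l /(congr1 (fun z => z + n%:Z)); rewrite /freq !subrK => /eqP.
by rewrite eqz_nat => /eqP /val_inj.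
Qed.

Lemma ltn_Sdouble_self : (n < N)%N.
Proof. by rewrite ltnS -addnn leq_addr. Qed.

Definition ord_freq0 : 'I_N := Ordinal ltn_Sdouble_self.

Lemma freq_eq0 j : (freq j == 0) = (j == ord_freq0).
Proof.
apply/eqP/eqP => [j0|->]; last by rewrite /freq subrr.
by apply: freq_inj; rewrite j0 /freq subrr.
Qed.

Lemma emode_mul_conj j l y :
  emode j y * (emode l y)^* = cexp2pi ((freq j - freq l)%:~R * y).
Proof. by rewrite /emode conj_cexp2pi -cexp2piD intrB mulrBl. Qed.

Lemma cint_emode_sum (I : Type) (r : seq I) (a : I -> R[i]) (m : I -> int) :
  cint (- (1/2)) (1/2) (fun y => \sum_(i <- r) a i * cexp2pi ((m i)%:~R * y)) =
  \sum_(i <- r) a i * (m i == 0)%:R.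
Proof.
rewrite cint_sumM => [|i|i]; last 2 first.
- exact: continuous_Re_cexp2piM.
- exact: continuous_Im_cexp2piM.
by apply: eq_bigr => i _; rewrite cint_cexp2pi_int.
Qed.

Lemma cint_tpoly c : cint (- (1/2)) (1/2) (tpoly c) = c ord_freq0.
Proof.
rewrite cint_emode_sum (bigD1 ord_freq0) //= freq_eq0 eqxx mulr1 big1 ?addr0 // => j j0.
by rewrite freq_eq0 (negbTE j0) mulr0.
Qed.

Lemma ip_tpoly c d : ip (tpoly c) (tpoly d) = \sum_j c j * (d j)^*.
Proof.
rewrite /ip (_ : (fun y => _) = fun y => \sum_(p : 'I_N * 'I_N)
    c p.1 * (d p.2)^* * cexp2pi ((freq p.1 - freq p.2)%:~R * y)).
  rewrite cint_emode_sum
    -(pair_bigA _ (fun j l => c j * (d l)^* * (freq j - freq l == 0)%:R)).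
  apply: eq_bigr => j _ /=; rewrite (bigD1 j) //= subrr eqxx mulr1 big1 ?addr0 // => l lj.
  by rewrite subr_eq0 (inj_eq freq_inj) eq_sym (negbTE lj) mulr0.
apply: funext => y; rewrite /tpoly rmorph_sum big_distrlr /=.
rewrite -(pair_bigA _ (fun j l => c j * (d l)^* * cexp2pi ((freq j - freq l)%:~R * y))).
by apply: eq_bigr => j _; apply: eq_bigr => l _; rewrite rmorphM /= -emode_mul_conj; ring.
Qed.

Lemma norm2sq_tpoly c : norm2sq (tpoly c) = \sum_j Normc.normc (c j) ^+ 2.
Proof.
by rewrite norm2sq_ip ip_tpoly Re_sum; apply: eq_bigr => j _; rewrite normc_sqrE.
Qed.

Lemma tpoly_trig_poly c : trig_poly n (tpoly c).
Proof. by exists c. Qed.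

Lemma trig_polyP p : trig_poly n p -> exists c, p = tpoly c.
Proof. by case=> c pc; exists c; apply: funext. Qed.

Lemma kernE x : kern n x = tpoly (fun j => (emode j x)^*).
Proof.
apply: funext => y; apply: eq_bigr => j _.
by rewrite /emode conj_cexp2pi -cexp2piD mulrBr addrC.
Qed.

Lemma ip_kern c x : ip (tpoly c) (kern n x) = tpoly c x.
Proof. by rewrite kernE ip_tpoly; apply: eq_bigr => j _; rewrite conjCK. Qed.

Definition basis_coef l : 'I_N -> R[i] := fun j => (j == l)%:R.

Lemma sum_mul_conj_basis_coef (F : 'I_N -> R[i]) l :
  \sum_j F j * (basis_coef l j)^* = F l.
Proof.
rewrite (bigD1 l) //= big1 ?addr0 /basis_coef ?eqxx ?rmorph1 ?mulr1 // => j /negbTE ->.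
by rewrite rmorph0 mulr0.
Qed.

Lemma tpoly_inj : injective tpoly.
Proof.
move=> c d cd; apply: funext => l.
by rewrite -(sum_mul_conj_basis_coef c) -(sum_mul_conj_basis_coef d) -!ip_tpoly cd.
Qed.

Lemma tpoly_basis_coef_freq0 y : tpoly (basis_coef ord_freq0) y = 1.
Proof.
rewrite /tpoly (bigD1 ord_freq0) //= big1 => [|j /negbTE j0]; last first.
  by rewrite /basis_coef j0 mul0r.
rewrite /basis_coef eqxx mul1r addr0 /emode.
have /eqP -> : freq ord_freq0 == 0 by rewrite freq_eq0.
by rewrite mulr0z mul0r cexp2pi0.
Qed.

End TrigPoly.

Arguments basis_coef {R n} l.

Lemma mulmx_inj_surj (K : fieldType) (m : nat) (M : 'M[K]_m) :
  (forall v : 'rV_m, v *m M = 0 -> v = 0) -> forall w : 'rV_m, exists v, v *m M = w.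
Proof.
move=> M_inj w; have uM : M \in unitmx by rewrite -row_free_unit; exact: inj_row_free.
by exists (w *m invmx M); rewrite mulmxKV.
Qed.

Section FrameCoef.
Variables (R : realType) (L : nat -> nat) (X : forall n, 'I_(L n) -> R)
  (tau : forall n, 'I_(L n) -> R) (n : nat).
Local Notation N := n.*2.+1.
Local Notation xk k := (@X n k).
Local Notation tk k := (@tau n k).
Implicit Types (c d : 'I_N -> R[i]).

Definition frame_coef c (j : 'I_N) : R[i] :=
  \sum_(k < L n) (tk k)%:C * tpoly c (xk k) * (emode j (xk k))^*.

Definition sample_form c d : R[i] :=
  \sum_(k < L n) (tk k)%:C * tpoly c (xk k) * (tpoly d (xk k))^*.

Lemma frameS_tpoly c : frameS X tau n (tpoly c) = tpoly (frame_coef c).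
Proof.
apply: funext => y; rewrite /frameS /tpoly /frame_coef.
under eq_bigr => k _ do rewrite ip_kern kernE [tpoly _ y]/tpoly big_distrr.
rewrite exchange_big /=; apply: eq_bigr => j _; rewrite big_distrl /=.
by apply: eq_bigr => k _; rewrite mulrA.
Qed.

Lemma sum_frame_coef_mul_conj c d :
  \sum_j frame_coef c j * (d j)^* = sample_form c d.
Proof.
rewrite /frame_coef /sample_form; under eq_bigr do rewrite big_distrl.
rewrite exchange_big; apply: eq_bigr => k _ /=.
set a := _ * tpoly c _; rewrite /tpoly rmorph_sum big_distrr; apply: eq_bigr => j _.
by rewrite rmorphM /=; ring.
Qed.

Lemma conj_sample_form c d : (sample_form c d)^* = sample_form d c.
Proof.
rewrite rmorph_sum; apply: eq_bigr => k _.
by rewrite !rmorphM /= conjCK conj_realC mulrAC.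
Qed.

Lemma sample_form_diag c :
  sample_form c c = (\sum_(k < L n) Normc.normc (tpoly c (xk k)) ^+ 2 * tk k)%:C.
Proof. by rewrite rmorph_sum; apply: eq_bigr => k _; rewrite rmorphM /= sqr_normcE; ring. Qed.

Lemma frame_coef_adjoint c d :
  \sum_j c j * (frame_coef d j)^* = \sum_j frame_coef c j * (d j)^*.
Proof.
rewrite !sum_frame_coef_mul_conj -conj_sample_form -sum_frame_coef_mul_conj rmorph_sum.
by apply: eq_bigr => j _; rewrite rmorphM /= conjCK mulrC.
Qed.

Definition frame_mx : 'M[R[i]]_N :=
  \matrix_(l, j) \sum_(k < L n) (tk k)%:C * emode l (xk k) * (emode j (xk k))^*.

Lemma frame_mxE c : \row_j c j *m frame_mx = \row_j frame_coef c j.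
Proof.
apply/rowP => j; rewrite !mxE /frame_coef.
under eq_bigr do rewrite !mxE big_distrr.
rewrite exchange_big /=; apply: eq_bigr => k _.
by rewrite /tpoly big_distrr big_distrl /=; apply: eq_bigr => l _; ring.
Qed.

End FrameCoef.

Section FrameMZ.
Variables (R : realType) (L : nat -> nat) (X : forall n, 'I_(L n) -> R)
  (tau : forall n, 'I_(L n) -> R) (A B : R) (n : nat).
Hypothesis hMZ : MZ_family X tau A B.
Local Notation N := n.*2.+1.
Local Notation xk k := (@X n k).
Local Notation tk k := (@tau n k).
Local Notation frame_coef := (frame_coef X tau).
Implicit Types (c d : 'I_N -> R[i]).

Lemma tau_ge0 k : 0 <= tk k.
Proof. by case: hMZ => _ _ /(_ n k) /ltW. Qed.

Lemma mz_lower_tpoly c :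
  A * \sum_j Normc.normc (c j) ^+ 2 <= \sum_(k < L n) Normc.normc (tpoly c (xk k)) ^+ 2 * tk k.
Proof. by case: hMZ => _ _ _ /(_ n _ (tpoly_trig_poly c))[]; rewrite norm2sq_tpoly. Qed.

Lemma mz_upper_tpoly c :
  \sum_(k < L n) Normc.normc (tpoly c (xk k)) ^+ 2 * tk k <= B * \sum_j Normc.normc (c j) ^+ 2.
Proof. by case: hMZ => _ _ _ /(_ n _ (tpoly_trig_poly c))[]; rewrite norm2sq_tpoly. Qed.

Lemma frame_coef_eq0 c : (forall j, frame_coef c j = 0) -> forall j, c j = 0.
Proof.
move=> Sc0.
have : sample_form X tau c c = 0.
  by rewrite -sum_frame_coef_mul_conj big1 // => j _; rewrite Sc0 mul0r.
rewrite sample_form_diag => /(congr1 (@complex.Re R)) /= sample0.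
have A0 : 0 < A by case: hMZ.
have := mz_lower_tpoly c; rewrite sample0 pmulr_rle0 // => le0.
have sum0 : \sum_j Normc.normc (c j) ^+ 2 = 0.
  by apply/le_anti; rewrite le0 sumr_ge0 // => j _; exact: sqr_ge0.
move=> j; apply/Normc.eq0_normc/eqP; rewrite -sqrf_eq0; apply/eqP.
exact: (psumr_eq0P (fun i _ => sqr_ge0 (Normc.normc (c i))) sum0).
Qed.

Lemma frame_coef_surj d : exists c, frame_coef c = d.
Proof.
have rowE (v : 'rV[R[i]]_N) : v = \row_j v 0 j by apply/rowP => j; rewrite mxE.
have M_inj (v : 'rV_N) : v *m frame_mx X tau n = 0 -> v = 0.
  rewrite [v]rowE frame_mxE => Sv0; apply/rowP => l; rewrite !mxE.
  apply: (frame_coef_eq0 (c := fun j => v 0 j)) => j.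
  by move/(congr1 (fun w : 'rV_N => w 0 j)): Sv0; rewrite !mxE.
have [v] := mulmx_inj_surj M_inj (\row_j d j); rewrite [v]rowE frame_mxE => Sv.
exists (fun j => v 0 j); apply: funext => j.
by move/(congr1 (fun w : 'rV_N => w 0 j)): Sv; rewrite !mxE.
Qed.

Lemma frameSinv_tpoly d :
  exists2 c, frameSinv X tau n (tpoly d) = tpoly c & frame_coef c = d.
Proof.
rewrite /frameSinv; case: pselect => [ex|]; last first.
  have [c Sc] := frame_coef_surj d.
  by case; exists (tpoly c); rewrite frameS_tpoly Sc; split=> //; exact: tpoly_trig_poly.
case: (cid ex) => p [/trig_polyP[c pc] Sp] /=; rewrite pc in Sp *.
by exists c => //; apply: tpoly_inj; rewrite -frameS_tpoly.
Qed.

Lemma sum_tau_le : \sum_(k < L n) tk k <= B.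
Proof.
have norm1 : \sum_j Normc.normc (basis_coef (ord_freq0 n) j) ^+ 2 = 1 :> R.
  rewrite (bigD1 (ord_freq0 n)) //= big1 => [|j /negbTE j0].
    by rewrite /basis_coef eqxx Normc.normc1 expr1n addr0.
  by rewrite /basis_coef j0 Normc.normc0 expr0n.
have := mz_upper_tpoly (basis_coef (ord_freq0 n)); rewrite norm1 mulr1; apply: le_trans.
by apply: ler_sum => k _; rewrite tpoly_basis_coef_freq0 Normc.normc1 expr1n mul1r.
Qed.

Lemma sample_energy_le (f : R -> R[i]) (M : R) : (forall x, Normc.normc (f x) <= M) ->
  \sum_(k < L n) Normc.normc (f (xk k)) ^+ 2 * tk k <= B * M ^+ 2.
Proof.
move=> fM.
have M0 : 0 <= M := le_trans (normc_ge0 _) (fM 0).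
rewrite mulrC; apply: le_trans (ler_wpM2l (sqr_ge0 M) sum_tau_le); rewrite mulr_sumr.
by apply: ler_sum => k _; apply: ler_wpM2r; rewrite ?tau_ge0 // ler_sqr ?nnegrE ?normc_ge0.
Qed.

Section DualOfOne.
Variable u : 'I_N -> R[i].
Hypothesis Su : frame_coef u = basis_coef (ord_freq0 n).

Lemma qweightE k : qweight X tau k = (tk k)%:C * (tpoly u (xk k))^*.
Proof.
rewrite /qweight /dualframe; set s := (Num.sqrt (tk k))%:C.
have -> : (fun y => s * kern n (xk k) y) = tpoly (fun j : 'I_N => s * (emode j (xk k))^*).
  apply: funext => y; rewrite kernE /tpoly big_distrr.
  by apply: eq_bigr => j _ /=; rewrite mulrA.
have [e -> Se] := frameSinv_tpoly (fun j : 'I_N => s * (emode j (xk k))^*).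
rewrite cint_tpoly -(sum_mul_conj_basis_coef e) -Su frame_coef_adjoint Se.
have ss : s * s = (tk k)%:C by rewrite -rmorphM /= -expr2 sqr_sqrtr ?tau_ge0.
rewrite -ss [tpoly u _]/tpoly rmorph_sum !big_distrr; apply: eq_bigr => j _ /=.
by rewrite rmorphM /=; ring.
Qed.

Lemma quad_tpoly c : quad X tau n (tpoly c) = cint (- (1/2)) (1/2) (tpoly c).
Proof.
rewrite cint_tpoly /quad; under eq_bigr do rewrite qweightE.
rewrite -(sum_mul_conj_basis_coef c) -Su frame_coef_adjoint sum_frame_coef_mul_conj.
by apply: eq_bigr => k _; rewrite mulrCA mulrA.
Qed.

Lemma sample_energy_dual_le :
  \sum_(k < L n) Normc.normc (tpoly u (xk k)) ^+ 2 * tk k <= A^-1.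
Proof.
set Q := \sum_(k < L n) _.
have A0 : 0 < A by case: hMZ.
have Q0 : 0 <= Q.
  by apply: sumr_ge0 => k _; rewrite mulr_ge0 ?sqr_ge0 ?tau_ge0.
have QE : Q%:C = (u (ord_freq0 n))^*.
  rewrite -sample_form_diag -sum_frame_coef_mul_conj Su.
  rewrite -(sum_mul_conj_basis_coef (fun j => (u j)^*)); apply: eq_bigr => j _.
  by rewrite mulrC /basis_coef rmorph_nat.
have normQ : Normc.normc (u (ord_freq0 n)) = Q.
  by rewrite -normc_conj -QE normc_real ger0_norm.
have Q2_le : A * Q ^+ 2 <= Q.
  apply: le_trans (mz_lower_tpoly u); rewrite ler_pM2l // -normQ (bigD1 (ord_freq0 n)) //=.
  by rewrite lerDl sumr_ge0 // => j _; exact: sqr_ge0.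
have [->|Q_neq0] := eqVneq Q 0; first by rewrite invr_ge0 ltW.
have Q_gt0 : 0 < Q by rewrite lt0r Q_neq0.
rewrite -(ler_pM2l A0) mulrV ?unitfE ?gt_eqF //.
by rewrite -(ler_pM2r Q_gt0) mul1r -mulrA -expr2.
Qed.

Lemma quad_sqr_le (f : R -> R[i]) :
  Normc.normc (quad X tau n f) ^+ 2 <=
    A^-1 * \sum_(k < L n) Normc.normc (f (xk k)) ^+ 2 * tk k.
Proof.
set a := fun k => Normc.normc (f (xk k)) * Num.sqrt (tk k).
set b := fun k => Num.sqrt (tk k) * Normc.normc (tpoly u (xk k)).
have ab k : a k * b k = Normc.normc (f (xk k)) * (tk k * Normc.normc (tpoly u (xk k))).
  by rewrite /a /b -mulrA (mulrA (Num.sqrt _)) -expr2 sqr_sqrtr ?tau_ge0.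
have quad_le : Normc.normc (quad X tau n f) <= \sum_k a k * b k.
  rewrite /quad; under eq_bigr do rewrite qweightE.
  apply: le_trans (normc_sum _ _) _; apply: ler_sum => k _.
  by rewrite !Normc.normcM normc_conj normc_real ger0_norm ?tau_ge0 // ab.
have sum_a2 : \sum_k a k ^+ 2 = \sum_k Normc.normc (f (xk k)) ^+ 2 * tk k.
  by apply: eq_bigr => k _; rewrite exprMn sqr_sqrtr ?tau_ge0.
have sum_b2 : \sum_k b k ^+ 2 = \sum_k Normc.normc (tpoly u (xk k)) ^+ 2 * tk k.
  by apply: eq_bigr => k _; rewrite exprMn sqr_sqrtr ?tau_ge0 // mulrC.
apply: (@le_trans _ _ ((\sum_k a k * b k) ^+ 2)).
  by rewrite ler_pXn2r ?nnegrE ?normc_ge0 //; apply: le_trans (normc_ge0 _) quad_le.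
apply: le_trans (sqr_sum_mul_le a b) _; rewrite sum_a2 sum_b2 mulrC ler_wpM2r //.
  by apply: sumr_ge0 => k _; rewrite mulr_ge0 ?sqr_ge0 ?tau_ge0.
exact: sample_energy_dual_le.
Qed.

End DualOfOne.

End FrameMZ.

Section SupNorm.
Variable R : realType.
Implicit Types f : R -> R[i].

Lemma periodic_intrD (T : Type) (g : R -> T) : (forall x, g (x + 1) = g x) ->
  forall (m : int) x, g (x + m%:~R) = g x.
Proof.
move=> g1; have gn (k : nat) x : g (x + k%:R) = g x.
  by elim: k x => [|k IH] x; rewrite ?addr0 // -natr1 addrA g1 IH.
case=> k x; first exact: gn.
by rewrite NegzE rmorphN /= -[in RHS](subrK (k.+1)%:R x) gn.
Qed.

Lemma sobolev_bounded s f : sobolev s f -> exists M, forall x, Normc.normc (f x) <= M.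
Proof.
case=> f1 cRe cIm _.
pose phi x := Re (f x) ^+ 2 + Im (f x) ^+ 2.
have cphi : continuous phi.
  have -> : phi = (fun x => Re (f x)) \* (fun x => Re (f x)) +
                  (fun x => Im (f x)) \* (fun x => Im (f x)).
    by apply: funext => x; rewrite /phi !expr2.
  move=> x; apply: continuousD; apply: continuousM.
  - exact: cRe.
  - exact: cRe.
  - exact: cIm.
  - exact: cIm.
have [c _ phi_max] := EVT_max (@ler01 R) (continuous_subspaceT cphi).
exists (Num.sqrt (phi c)) => x.
have x01 : x - (Num.floor x)%:~R \in `[0, 1].
  rewrite in_itv /= subr_ge0 Num.Theory.floor_le /= lerBlDl.
  by have := Num.Theory.floorD1_gt x; rewrite intrD /= addrC => /ltW.
have -> : f x = f (x - (Num.floor x)%:~R).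
  by rewrite -{1}(subrK (Num.floor x)%:~R x) periodic_intrD.
by move: (phi_max _ x01); rewrite /phi; case: (f _) => a b /= le_phi; rewrite ler_wsqrtr.
Qed.

Lemma normc_le_supnorm f : (exists M, forall x, Normc.normc (f x) <= M) ->
  forall x, Normc.normc (f x) <= supnorm f.
Proof.
move=> [M fM] x; apply: ub_le_sup; last by exists x.
by exists M => _ [y _ <-]; exact: fM.
Qed.

End SupNorm.

Theorem lemma2p6 (R : realType) (L : nat -> nat)
    (X : forall n, 'I_(L n) -> R) (tau : forall n, 'I_(L n) -> R) (A B : R) :
  MZ_family X tau A B ->
  (forall (n : nat) (p : R -> R[i]), trig_poly n p ->
     quad X tau n p = cint (- (1/2)) (1/2) p) /\
  (forall (s : R) (f : R -> R[i]), 1/2 < s -> sobolev s f ->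
     forall n : nat,
       Normc.normc (quad X tau n f) ^+ 2
         <= A^-1 * \sum_(k < L n) Normc.normc (f (X n k)) ^+ 2 * tau n k
     /\ A^-1 * \sum_(k < L n) Normc.normc (f (X n k)) ^+ 2 * tau n k
         <= B / A * supnorm f ^+ 2).
Proof.
move=> hMZ; split=> [n p /trig_polyP[c ->]|s f _ fs n];
  have [u Su] := frame_coef_surj hMZ (basis_coef (ord_freq0 n)).
  by rewrite (quad_tpoly hMZ Su).
split; first exact (quad_sqr_le hMZ Su f).
have A0 : 0 < A by case: hMZ.
rewrite [B / A]mulrC -mulrA; apply: ler_wpM2l; first by rewrite invr_ge0 ltW.
exact (sample_energy_le n hMZ (normc_le_supnorm (sobolev_bounded fs))).
Qed.
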